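(* Let $J_1$ be the graph with vertex set $\{a,b,c,d,e\}$ and edge set $\{ab,ac,bc,ae,be,cd,de,ad\}$, and let $J_2$ be the graph with the same vertex set and edge set $\{ab,ac,bc,ae,be,cd,de,bd\}$. Let $G$ be any graph obtained by taking six graphs $Q_1,\dots,Q_6$, each isomorphic to $J_1$ or to $J_2$ (the choice may differ for different $i$), pairwise vertex-disjoint, and identifying the copies of the edge $ab$ (vertex $a$ of each copy identified to a single vertex $a$, vertex $b$ of each copy identified to a single vertex $b$), the remaining vertices staying distinct. Then $G$ is not $3$-choosable.
   Context: A graph $G$ is $k$-choosable if for every assignment $L$ of a set $L(v)$ of $k$ colours to each vertex $v$, there is a proper colouring $\phi$ of $G$ with $\phi(v)\in L(v)$ for all $v$. In the paper, the edge $ab$ of $J_1$, $J_2$ and of $G$ is called the handle; the class of all graphs $G$ so obtained is denoted $\mathcal{J}$. *)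

From mathcomp Require Import all_boot.
Set Implicit Arguments. Unset Strict Implicit. Unset Printing Implicit Defensive.

Definition choosable (V : finType) (adj : rel V) (k : nat) : Prop :=
  forall L : V -> seq nat, (forall v, uniq (L v) /\ size (L v) = k) ->
  exists phi : V -> nat, (forall v, phi v \in L v) /\
                         (forall u v, adj u v -> phi u != phi v).

(* Vertices of J1/J2: 'I_5 with a=0, b=1, c=2, d=3, e=4. *)
Definition J1_edges : seq (nat * nat) :=
  [:: (0,1); (0,2); (1,2); (0,4); (1,4); (2,3); (3,4); (0,3)].
Definition J2_edges : seq (nat * nat) :=
  [:: (0,1); (0,2); (1,2); (0,4); (1,4); (2,3); (3,4); (1,3)].

Definition Jadj (es : seq (nat * nat)) : rel 'I_5 :=
  fun x y => ((nat_of_ord x, nat_of_ord y) \in es) || ((nat_of_ord y, nat_of_ord x) \in es).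

(* Vertices of G: inl false = a, inl true = b (the handle),
   inr (i, j) = the j-th non-handle vertex (c, d, e for j = 0, 1, 2) of copy Q_i. *)
Definition GV : finType := (bool + 'I_6 * 'I_3)%type.

Definition emb (i : 'I_6) (x : 'I_5) : GV :=
  if (x < 2)%N then inl (x == 1 :> nat) else inr (i, inord (x - 2)).

Definition Gadj (t : 'I_6 -> bool) : rel GV :=
  fun u v => [exists i : 'I_6, exists x : 'I_5, exists y : 'I_5,
    [&& Jadj (if t i then J1_edges else J2_edges) x y, emb i x == u & emb i y == v]].

From mathcomp Require Import all_boot.

Set Implicit Arguments.
Unset Strict Implicit.
Unset Printing Implicit Defensive.

(* Give the handle vertices a and b the list {1, 2, 3}, and dedicate one copy Q_i to
   each of the six ordered pairs (p, q) of distinct colours from it.  In that copy c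
   gets {p, q, 4}, e gets {p, q, 5} and d gets {r, 4, 5}, where r is the colour of the
   handle vertex adjacent to d.  If a and b are coloured p and q, then c and e are
   forced to 4 and 5, and d sees all three colours of its list. *)

Lemma mem_seq3_neq (T : eqType) (x y z w : T) :
  w \in [:: x; y; z] -> w != x -> w != y -> w = z.
Proof. by rewrite !inE => /or3P[| |/eqP//] /eqP ->; rewrite eqxx. Qed.

Lemma gadget_not_colourable (T : eqType) (p q r x y c d e : T) :
  c \in [:: p; q; x] -> e \in [:: p; q; y] -> d \in [:: r; x; y] ->
  c != p -> c != q -> e != p -> e != q -> d != r -> d != c -> d != e -> False.
Proof.
move=> /mem_seq3_neq c_x /mem_seq3_neq e_y d_in cp cq ep eq' dr.
rewrite (c_x cp cq) (e_y ep eq') => dx dy.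
by rewrite (mem_seq3_neq d_in dr dx) eqxx in dy.
Qed.

Definition copy_vertex (i : 'I_6) (x : nat) : GV :=
  if x < 2 then inl (x == 1) else inr (i, inord (x - 2)).

Lemma emb_inord i x : x < 5 -> emb i (inord x) = copy_vertex i x.
Proof. by move=> x_lt5; rewrite /emb inordK. Qed.

Lemma Gadj_copy_vertex t i x y :
  x < 5 -> y < 5 ->
  let es := if t i then J1_edges else J2_edges in
  ((x, y) \in es) || ((y, x) \in es) -> Gadj t (copy_vertex i x) (copy_vertex i y).
Proof.
move=> x_lt5 y_lt5 es xy_edge; rewrite -!emb_inord //.
apply/existsP; exists i; apply/existsP; exists (inord x); apply/existsP; exists (inord y).
by rewrite /Jadj !inordK // xy_edge !eqxx.
Qed.

Definition handle_pairs : seq (nat * nat) :=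
  [:: (1, 2); (2, 1); (1, 3); (3, 1); (2, 3); (3, 2)].

Definition pair_of (i : 'I_6) : nat * nat := nth (0, 0) handle_pairs i.

Lemma pair_of_onto pq : pq \in handle_pairs -> exists i, pair_of i = pq.
Proof.
rewrite -index_mem => pq_idx.
by exists (inord (index pq handle_pairs)); rewrite /pair_of inordK ?nth_index // -index_mem.
Qed.

Definition copy_list (d_sees_a : bool) (pq : nat * nat) (j : 'I_3) : seq nat :=
  match nat_of_ord j with
  | 0 => [:: pq.1; pq.2; 4]
  | 1 => [:: if d_sees_a then pq.1 else pq.2; 4; 5]
  | _ => [:: pq.1; pq.2; 5]
  end.

Definition lists (t : 'I_6 -> bool) (v : GV) : seq nat :=
  match v with
  | inl _ => [:: 1; 2; 3]
  | inr (i, j) => copy_list (t i) (pair_of i) j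
  end.

Lemma lists_uniq_size t v : uniq (lists t v) /\ size (lists t v) = 3.
Proof.
case: v => [//|[i j]] /=.
by case: i => [[|[|[|[|[|[|//]]]]]] ?]; case: j => [[|[|[|//]]] ?]; case: (t _).
Qed.

Lemma copy_not_coloured t (phi : GV -> nat) i :
  (forall v, phi v \in lists t v) -> (forall u v, Gadj t u v -> phi u != phi v) ->
  pair_of i <> (phi (inl false), phi (inl true)).
Proof.
move=> phi_lists phi_proper ab_col; pose col x := phi (copy_vertex i x).
have c_in := phi_lists (copy_vertex i 2); have d_in := phi_lists (copy_vertex i 3).
have e_in := phi_lists (copy_vertex i 4).
rewrite /= /copy_list !inordK //= ab_col /= -[phi (inl false)]/(col 0)
  -[phi (inl true)]/(col 1) -(fun_if col) in c_in d_in e_in.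
apply: (gadget_not_colourable c_in e_in d_in).
all: by apply/phi_proper/Gadj_copy_vertex => //; case: (t i).
Qed.

Theorem lemma2 (t : 'I_6 -> bool) : ~ choosable (Gadj t) 3.
Proof.
move=> /(_ (lists t) (lists_uniq_size t)) [phi [phi_lists phi_proper]].
have ab_neq : phi (inl false) != phi (inl true).
  by apply/phi_proper/(@Gadj_copy_vertex _ ord0 0 1) => //; case: (t _).
have : (phi (inl false), phi (inl true)) \in handle_pairs.
  move: (phi_lists (inl false)) (phi_lists (inl true)) ab_neq; rewrite !inE.
  by case/or3P=> /eqP-> /or3P[]/eqP->.
by case/pair_of_onto=> i; apply: copy_not_coloured.
Qed.
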